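(* Let $p,q\in[1,\infty]$, let $\varphi_0,\varphi_1,\varphi$ be positive non-degenerate quasi-concave functions on $(0,\infty)$, let $\{\widetilde t_k\}_{k\in\mathbb Z}$ be a discretizing sequence for $\varphi(\varphi_0,\varphi_1)$ and $\{t_k\}_{k\in\mathbb Z}$ a discretizing sequence for $\varphi$. Then $$\left(l_q\Big(\frac1{\varphi_0(\widetilde t_k)}\Big),\,l_q\Big(\frac1{\varphi_1(\widetilde t_k)}\Big)\right)_{\varphi,p}=l_p\Big(l_q^{M_k}\Big(\frac1{\varphi(\varphi_0,\varphi_1)(\widetilde t_i)}\Big)\Big),$$ where $M_k=\{i:\ t_k\le \varphi_1(\widetilde t_i)/\varphi_0(\widetilde t_i)\le t_{k+1}\}$.
   Context: A function $\varphi:(0,\infty)\to(0,\infty)$ is non-degenerate quasi-concave if it is non-decreasing, $\varphi(t)/t$ is non-increasing, and $\lim_{t\to0+}\varphi(t)=\lim_{t\to\infty}\varphi(t)/t=\lim_{t\to0+}t/\varphi(t)=\lim_{t\to\infty}1/\varphi(t)=0$. $\varphi(\varphi_0,\varphi_1)(t)=\varphi_0(t)\varphi(\varphi_1(t)/\varphi_0(t))$. A positive sequence is strongly increasing if $\inf_k a_{k+1}/a_k\ge2$, strongly decreasing if $\sup_k a_{k+1}/a_k\le1/2$. A strongly increasing $\{s_k\}_{k\in\mathbb Z}$ is a discretizing sequence for a non-degenerate quasi-concave $\psi$ if $\{\psi(s_k)\}$ is strongly increasing, $\{\psi(s_k)/s_k\}$ is strongly decreasing, and $\mathbb Z=\mathbb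 Z_1\sqcup\mathbb Z_2$ with $\psi(s_{k+1})\le2\psi(s_k)$ for $k\in\mathbb Z_1$ and $\psi(s_k)/s_k\le2\psi(s_{k+1})/s_{k+1}$ for $k\in\mathbb Z_2$. For a Banach couple $\overline X$, $K(t,x;\overline X)=\inf_{x=x_0+x_1}(\|x_0\|_{X_0}+t\|x_1\|_{X_1})$, and $\overline X_{\varphi,p}$ is the space of $x\in X_0+X_1$ with $\big(\sum_k(K(t_k,x;\overline X)/\varphi(t_k))^p\big)^{1/p}<\infty$ (sup if $p=\infty$), where $\{t_k\}$ is the given discretizing sequence for $\varphi$. For a sequence space $E$ and positive weight $u$, $E(u)=\{a:\{a_iu_i\}\in E\}$ with norm $\|\{a_iu_i\}\|_E$; $l_p(l_q^{M_k})$ has norm $\big(\sum_k(\sum_{i\in M_k}|a_i|^q)^{p/q}\big)^{1/p}$ (usual modification for $\infty$). Sequences are indexed by $\mathbb Z$; equality means equal sets with equivalent norms. *)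

From HB Require Import structures.
From mathcomp Require Import all_boot all_order all_algebra.
From mathcomp Require Import all_classical all_reals all_analysis.
Set Implicit Arguments. Unset Strict Implicit. Unset Printing Implicit Defensive.
Import Order.TTheory GRing.Theory Num.Theory.
Import numFieldNormedType.Exports.
Local Open Scope classical_set_scope.
Local Open Scope ring_scope.

Section Defs.
Variable R : realType.

Definition ndqc (phi : R -> R) : Prop :=
  [/\ (forall t, 0 < t -> 0 < phi t),
      (forall s t, 0 < s -> s <= t -> phi s <= phi t),
      (forall s t, 0 < s -> s <= t -> phi t / t <= phi s / s),
      (phi x @[x --> 0^'+] --> 0) /\ (phi x / x @[x --> +oo] --> 0)
    & (x / phi x @[x --> 0^'+] --> 0) /\ ((phi x)^-1 @[x --> +oo] --> 0)].

Definition phi_comp (phi phi0 phi1 : R -> R) (t : R) : R :=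
  phi0 t * phi (phi1 t / phi0 t).

Definition strongly_increasing (a : int -> R) : Prop :=
  (forall k, 0 < a k) /\ (forall k, 2 <= a (k + 1)%R / a k).

Definition strongly_decreasing (a : int -> R) : Prop :=
  (forall k, 0 < a k) /\ (forall k, a (k + 1)%R / a k <= 2^-1).

Definition discretizing (psi : R -> R) (s : int -> R) : Prop :=
  [/\ strongly_increasing s,
      strongly_increasing (fun k => psi (s k)),
      strongly_decreasing (fun k => psi (s k) / s k)
    & exists Z1 : set int, forall k,
        (Z1 k -> psi (s (k + 1)%R) <= 2 * psi (s k)) /\
        (~ Z1 k -> psi (s k) / s k <= 2 * (psi (s (k + 1)%R) / s (k + 1)%R))].

Local Open Scope ereal_scope.

(* l_r norm (r in [1,oo]) of a nonnegative family f over the index set A;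
   sup (with 0 for empty A) when r = +oo. *)
Definition lnorm (r : \bar R) (A : set int) (f : int -> \bar R) : \bar R :=
  match r with
  | +oo => ereal_sup ([set 0] `|` (f @` A))
  | r'%:E => (\esum_(i in A) (f i `^ r')) `^ (r'^-1)
  | -oo => 0
  end.

Definition lq_w (q : \bar R) (u : int -> R) (a : int -> R) : \bar R :=
  lnorm q setT (fun i => (`|a i * u i|)%:E).

Definition Kfun (q : \bar R) (u0 u1 : int -> R) (t : R) (x : int -> R) : \bar R :=
  ereal_inf [set y | exists x0 x1 : int -> R,
               (forall i, x i = (x0 i + x1 i)%R) /\
               y = lq_w q u0 x0 + t%:E * lq_w q u1 x1].

(* norm in (l_q(u0), l_q(u1))_{phi,p} with discretizing sequence t *)
Definition interp_norm (p q : \bar R) (u0 u1 : int -> R) (phi : R -> R)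
    (t : int -> R) (x : int -> R) : \bar R :=
  lnorm p setT (fun k => Kfun q u0 u1 (t k) x * ((phi (t k))^-1)%:E).

Definition mixed_norm (p q : \bar R) (M : int -> set int) (w : int -> R)
    (a : int -> R) : \bar R :=
  lnorm p setT (fun k => lnorm q (M k) (fun i => (`|a i * w i|)%:E)).

End Defs.

From HB Require Import structures.
From mathcomp Require Import all_boot all_order all_algebra.
From mathcomp Require Import all_classical all_reals all_analysis.
From mathcomp Require Import ring lra zify.
Set Implicit Arguments. Unset Strict Implicit. Unset Printing Implicit Defensive.
Import Order.TTheory GRing.Theory Num.Theory.
Local Open Scope classical_set_scope.
Local Open Scope ring_scope.

(* Write x_i = phi1(t~_i) / phi0(t~_i).  Up to a factor 4, the K-functional
   K(t_k, a) of the couple (l_q(1/phi0(t~)), l_q(1/phi1(t~))) is the l_q norm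
   of |a_i| min(1, t_k / x_i) / phi0(t~_i), so after division by phi(t_k) each
   entry is |a_i| w_i times the ratio min(1, t_k / x_i) phi(x_i) / phi(t_k).
   For x_i in the block M_j quasi-concavity and the geometric growth of
   phi(t_k) and decay of phi(t_k)/t_k bound this ratio by 2^(1-|k-j|); for x_i
   in M_k it is at least 1/2 at k or at k+1, according to the splitting of
   the indices of a discretizing sequence.  Each norm is then dominated by the
   l_p norm of the other after applying Y |-> (sup_j s^|k-j| Y_j)_k with
   s = 2^(-1/2), which is bounded on l_p because s^|k-j| is summable. *)

Section PowerE.
Variable R : realType.
Local Open Scope ereal_scope.

Lemma lee_poweR (r : R) (x y : \bar R) :
  (0 <= r)%R -> 0 <= x -> x <= y -> x `^ r <= y `^ r.
Proof.
move=> r0 x0 xy; apply: gt0_ler_poweR => //;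
  by rewrite in_itv /= leey andbT // (le_trans x0 xy).
Qed.

Lemma poweRK (r : R) (x : \bar R) : r != 0%R -> 0 <= x -> (x `^ r) `^ r^-1 = x.
Proof. by move=> r0 x0; rewrite -poweRrM mulfV // poweRe1. Qed.

Lemma poweRVK (r : R) (x : \bar R) : r != 0%R -> 0 <= x -> (x `^ r^-1) `^ r = x.
Proof. by move=> r0 x0; rewrite -poweRrM mulVf // poweRe1. Qed.

Lemma poweR_le_mul (r C : R) (x y : \bar R) : (0 <= r)%R -> (0 <= C)%R ->
  0 <= x -> 0 <= y -> x <= C%:E * y -> x `^ r <= (C `^ r)%:E * y `^ r.
Proof.
move=> r0 C0 x0 y0 xy; rewrite -poweR_EFin -poweRM ?lee_fin //.
exact: lee_poweR.
Qed.

Lemma poweRD_le (x y : \bar R) (r : R) : (0 <= r)%R -> 0 <= x -> 0 <= y ->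
  (x + y) `^ r <= (2 `^ r)%:E * (x `^ r + y `^ r).
Proof.
move=> r0; wlog xy : x y / x <= y => [wlog_xy x0 y0|x0 y0].
  have [/wlog_xy|/ltW/wlog_xy] := leP x y; first exact.
  by rewrite addeC [X in _ * X]addeC; apply.
have x2y : x + y <= 2%:E * y.
  by rewrite (_ : 2%:E = 1 + 1) ?ge0_muleDl ?mul1e ?leeD2r.
apply: le_trans (lee_poweR r0 (adde_ge0 x0 y0) x2y) _.
rewrite poweRM // poweR_EFin; apply: lee_wpmul2l; first by rewrite lee_fin powR_ge0.
by rewrite leeDr // poweR_ge0.
Qed.

End PowerE.

Section ESum.
Variable R : realType.
Local Open Scope ereal_scope.

Lemma esum_poweR_ge0 (T : choiceType) (A : set T) (f : T -> \bar R) (r : R) :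
  0 <= \esum_(i in A) f i `^ r.
Proof. by apply: esum_ge0 => i _; exact: poweR_ge0. Qed.

Lemma esumZl (T : choiceType) (A : set T) (f : T -> \bar R) (c : R) :
  (0 < c)%R -> (forall i, 0 <= f i) ->
  \esum_(i in A) (c%:E * f i) = c%:E * \esum_(i in A) f i.
Proof.
move=> c0 f0; rewrite /esum -ereal_sup_pZl // image_comp.
by congr ereal_sup; apply: eq_imagel => X _ /=; rewrite ge0_mule_fsumr.
Qed.

Lemma esum_ge_term (T : choiceType) (A : set T) (a : T -> \bar R) j :
  A j -> a j <= \esum_(i in A) a i.
Proof.
move=> Aj; apply: esum_ge; exists [set j]; last by rewrite fsbig_set1.
by split; [exact: finite_set1|move=> i ->].
Qed.

Lemma esum_swap (T1 T2 : choiceType) (A : set T1) (B : set T2)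
    (F : T1 -> T2 -> \bar R) : (forall i j, 0 <= F i j) ->
  \esum_(i in A) \esum_(j in B) F i j = \esum_(j in B) \esum_(i in A) F i j.
Proof.
move=> F0; rewrite !esum_esum //.
rewrite (reindex_esum (B `*`` (fun=> A)) _ (fun x => (x.2, x.1))) //.
split=> [[i j] [? ?]|[i j] [j' i'] _ _ [-> ->]|[i j] [? ?]] //=.
by exists (j, i).
Qed.

Lemma le_esum_mulr (T : choiceType) (A : set T) (a : T -> \bar R) (y : \bar R) :
  (forall i, 0 <= a i) -> 0 <= y ->
  \esum_(i in A) (a i * y) <= (\esum_(i in A) a i) * y.
Proof.
move=> a0 y0; apply: ge_ereal_sup => _ [X [finX XA] <-] /=.
rewrite -ge0_mule_fsuml //; apply: lee_wpmul2r => //.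
by apply: ereal_sup_ubound; exists X.
Qed.

Lemma esum_le_cover (T K : choiceType) (M : K -> set T) (f : T -> \bar R) :
  (forall i, 0 <= f i) -> (forall i, exists j, M j i) ->
  \esum_(i in [set: T]) f i <= \esum_(j in [set: K]) \esum_(i in M j) f i.
Proof.
move=> f0 cover; under [X in _ <= X]eq_esum do rewrite esum_mkcond.
rewrite esum_swap => [|j i]; last by case: ifP.
apply: le_esum => i _; have [j Mji] := cover i.
apply: le_trans _
  (@esum_ge_term _ [set: K] (fun j => if i \in M j then f i else 0) j I).
by rewrite /= ifT ?inE.
Qed.

Lemma poweR_sup_le_esum (z : int -> \bar R) (r : R) :
  (0 < r)%R -> (forall j, 0 <= z j) ->
  ereal_sup (range z) `^ r <= \esum_(j in [set: int]) z j `^ r.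
Proof.
move=> r0 z0; have rN0 : r != 0%R by rewrite gt_eqF.
rewrite -[X in _ <= X](poweRVK rN0 (esum_poweR_ge0 _ _ _)).
apply: lee_poweR (ltW r0) _ _.
  by apply: le_trans (z0 0%R) _; apply: ereal_sup_ubound; exists 0%R.
apply: ge_ereal_sup => _ [j _ <-]; rewrite -(poweRK rN0 (z0 j)).
apply: lee_poweR; [by rewrite invr_ge0 ltW|exact: poweR_ge0|].
exact: esum_ge_term.
Qed.

Lemma nneseries_geometric_le (s : R) : (0 < s)%R -> (s < 1)%R ->
  \sum_(n <oo) (s ^+ n)%:E <= ((1 - s)^-1)%:E.
Proof.
move=> s0 s1; apply: lime_le.
  by apply: is_cvg_nneseries => n _; rewrite lee_fin exprn_ge0 // ltW.
apply: nearW => n; rewrite sumEFin lee_fin.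
have := @geometric_le_lim R n 1 s ler01 s0; rewrite (ger0_norm (ltW s0)) mul1r.
by rewrite -exprn_geometric => /(_ s1).
Qed.

Lemma esum_geometric_distz_le (s : R) (k : int) : (0 < s)%R -> (s < 1)%R ->
  \esum_(j in [set: int]) (s ^+ `|k - j|%N)%:E <= (2 * (1 - s)^-1)%:E.
Proof.
move=> s0 s1.
have g0 j : 0 <= (s ^+ `|k - j|%N)%:E by rewrite lee_fin exprn_ge0 // ltW.
have ray (e : nat -> int) : injective e -> (forall n, (n <= `|k - e n|)%N) ->
    \esum_(j in range e) (s ^+ `|k - j|%N)%:E <= ((1 - s)^-1)%:E.
  move=> e_inj e_far; rewrite esum_image; last by move=> m n _ _ /e_inj.
  rewrite -nneseries_esumT // (le_trans _ (nneseries_geometric_le s0 s1)) //.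
  apply: lee_nneseries => [n _ _|n _]; rewrite lee_fin.
    exact: exprn_ge0 (ltW s0).
  exact: ler_wiXn2l (ltW s0) (ltW s1) _ _ (e_far n).
rewrite (@esumID R int [set j | (k <= j)%R] [set: int]) // !setTI.
rewrite (_ : 2 * _ = (1 - s)^-1 + (1 - s)^-1)%R ?EFinD; last ring.
apply: leeD.
- rewrite (_ : [set j | (k <= j)%R] = range (fun n : nat => k + n%:Z)%R).
    by apply: ray => [m n /addrI [] //|n]; rewrite opprD addrA subrr sub0r abszN.
  apply/seteqP; split => j /=; last by case=> n _ <-; rewrite lerDl.
  by move=> kj; exists `|j - k|%N => //; lia.
- rewrite (_ : ~` [set j | (k <= j)%R] = range (fun n : nat => k - n.+1%:Z)%R).
    apply: ray => [m n /addrI /oppr_inj [] //|n].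
    by rewrite opprB addrC subrK absz_nat.
  apply/seteqP; split => j /=; last by case=> n _ <-; lia.
  by move=> /negP; rewrite -ltNge => jk; exists `|(k - j - 1)%R|%N => //; lia.
Qed.

End ESum.

Section LNorm.
Variable R : realType.
Local Open Scope ereal_scope.
Implicit Types (f g h : int -> \bar R) (A B : set int).

Lemma lnorm_ge0 (r : \bar R) A f : 0 <= lnorm r A f.
Proof.
case: r => [r| |] /=; [exact: poweR_ge0| |by []].
by apply: ereal_sup_ubound; left.
Qed.

Lemma le_lnorm (r : \bar R) A B f g : 1 <= r -> A `<=` B ->
  (forall i, 0 <= f i) -> (forall i, A i -> f i <= g i) ->
  lnorm r A f <= lnorm r B g.
Proof.
case: r => [r| |] //= r1 AB f0 fg.
- have r0 : (0 <= r)%R by rewrite lee_fin in r1; lra.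
  apply: lee_poweR; [by rewrite invr_ge0|exact: esum_poweR_ge0|].
  rewrite esum_mkcond [X in _ <= X]esum_mkcond; apply: le_esum => i _.
  case: ifPn => [/[!inE] Ai|_]; last by case: ifP => _; rewrite ?poweR_ge0.
  by rewrite ifT ?inE; [exact: lee_poweR r0 (f0 i) (fg i Ai)|exact: AB].
- apply: ge_ereal_sup => x [->|[i Ai <-]]; first by apply: ereal_sup_ubound; left.
  apply: le_trans (fg i Ai) _; apply: ereal_sup_ubound; right.
  by exists i => //; exact: AB.
Qed.

Lemma lnormZ (r : \bar R) A f (c : R) : 1 <= r -> (0 < c)%R ->
  (forall i, 0 <= f i) -> lnorm r A (fun i => c%:E * f i) = c%:E * lnorm r A f.
Proof.
case: r => [r| |] //= r1 c0 f0.
- have r0 : (0 < r)%R by rewrite lee_fin in r1; lra.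
  under eq_esum do rewrite poweRM ?lee_fin ?(ltW c0) // poweR_EFin.
  rewrite esumZl ?powR_gt0 // => [|i]; last exact: poweR_ge0.
  rewrite poweRM ?lee_fin ?powR_ge0 ?esum_poweR_ge0 // poweR_EFin.
  by rewrite -powRrM mulfV ?gt_eqF // powRr1 // ltW.
- rewrite -ereal_sup_pZl // image_setU image_set1 mule0 image_comp.
  by congr (ereal_sup (_ `|` _)).
Qed.

Lemma lnorm_le_add (r : \bar R) A f g h : 1 <= r ->
  (forall i, 0 <= f i) -> (forall i, 0 <= g i) -> (forall i, 0 <= h i) ->
  (forall i, h i <= f i + g i) ->
  lnorm r A h <= 4%:E * (lnorm r A f + lnorm r A g).
Proof.
case: r => [r| |] //= r1 f0 g0 h0 hfg.
- have r0 : (0 < r)%R by rewrite lee_fin in r1; lra.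
  have ri0 : (0 <= r^-1)%R by rewrite invr_ge0 ltW.
  set F := \esum_(i in A) f i `^ r; set G := \esum_(i in A) g i `^ r.
  have FG : \esum_(i in A) h i `^ r <= (2 `^ r)%:E * (F + G).
    rewrite /F /G -esumD => [||i _];
      [|by move=> i _; exact: poweR_ge0|exact: poweR_ge0].
    rewrite -esumZl ?powR_gt0 // => [|i]; last by rewrite adde_ge0 ?poweR_ge0.
    apply: le_esum => i _; apply: le_trans (poweRD_le (ltW r0) (f0 i) (g0 i)).
    exact: lee_poweR (ltW r0) (h0 i) (hfg i).
  apply: le_trans (lee_poweR ri0 (esum_poweR_ge0 _ _ _) FG) _.
  rewrite poweRM ?lee_fin ?powR_ge0 ?adde_ge0 ?esum_poweR_ge0 //.
  rewrite poweR_EFin -powRrM mulfV ?gt_eqF // powRr1 //.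
  have r2 : (2 `^ r^-1 <= 2 :> R)%R.
    by apply: ler1_powR; rewrite ?ler1n // invf_le1 //; rewrite lee_fin in r1.
  apply: le_trans (lee_wpmul2l _ (poweRD_le ri0 (esum_poweR_ge0 _ _ _)
                                              (esum_poweR_ge0 _ _ _))) _ => //.
  rewrite muleA -EFinM; apply: lee_wpmul2r; first by rewrite adde_ge0 ?poweR_ge0.
  by rewrite lee_fin; lra.
- have sup_ge0 (k : int -> \bar R) : 0 <= ereal_sup ([set 0] `|` k @` A).
    by apply: ereal_sup_ubound; left.
  apply: ge_ereal_sup => x [->|[i Ai <-]]; first by rewrite mule_ge0 ?adde_ge0.
  apply: le_trans (hfg i) (le_trans _ (lee_pemull _ _)).
  + by apply: leeD; apply: ereal_sup_ubound; right; exists i.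
  + by rewrite adde_ge0.
  + by rewrite lee_fin; lra.
Qed.

End LNorm.

Section DecaySup.
Variables (R : realType) (s : R).
Hypotheses (s_gt0 : 0 < s) (s_lt1 : s < 1).

Let decay_powR_le n (r : R) : 1 <= r -> (s ^+ n) `^ r <= s ^+ n.
Proof. by move=> r1; rewrite ge1r_powR // exprn_gt0 //= exprn_ile1 // ltW. Qed.

Let decay_S := 2 * (1 - s)^-1.

Let decay_S_gt0 : 0 < decay_S.
Proof. by rewrite divr_gt0 // subr_gt0. Qed.

Definition decay_const (r : \bar R) : R :=
  if r is r'%:E then decay_S `^ r'^-1 else 1.

Lemma decay_const_gt0 r : 0 < decay_const r.
Proof. by case: r => [r| |] //=; exact: powR_gt0. Qed.

Local Open Scope ereal_scope.
Implicit Types (X Y : int -> \bar R).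

Definition decay_sup k Y := ereal_sup (range (fun j => (s ^+ `|k - j|%N)%:E * Y j)).

Let decay_ge0 n : 0 <= (s ^+ n)%:E.
Proof. by rewrite lee_fin exprn_ge0 // ltW. Qed.

Lemma decay_sup_ub k Y j : (s ^+ `|k - j|%N)%:E * Y j <= decay_sup k Y.
Proof. by apply: ereal_sup_ubound; exists j. Qed.

Lemma decay_sup_ge0 k Y : (forall j, 0 <= Y j) -> 0 <= decay_sup k Y.
Proof. by move=> Y0; apply: le_trans (decay_sup_ub k Y k); rewrite mule_ge0. Qed.

Lemma decay_supZ k Y (c : R) : (0 < c)%R ->
  decay_sup k (fun j => c%:E * Y j) = c%:E * decay_sup k Y.
Proof.
move=> c0; rewrite /decay_sup -ereal_sup_pZl // image_comp.
by congr ereal_sup; apply: eq_imagel => j _ /=; rewrite muleCA.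
Qed.

Lemma poweR_decay_sup_le (r : R) k Y : (1 <= r)%R -> (forall j, 0 <= Y j) ->
  decay_sup k Y `^ r <= \esum_(j in [set: int]) (s ^+ `|k - j|%N)%:E * Y j `^ r.
Proof.
move=> r1 Y0; have r0 : (0 < r)%R by lra.
have := poweR_sup_le_esum (z := fun j : int => (s ^+ `|k - j|%N)%:E * Y j) r0.
move=> /(_ (fun j => mule_ge0 (decay_ge0 _) (Y0 j))) /le_trans; apply.
apply: le_esum => j _; rewrite poweRM // poweR_EFin.
apply: lee_wpmul2r; first exact: poweR_ge0.
by rewrite lee_fin decay_powR_le.
Qed.

Lemma lnorm_decay_sup_le (p : \bar R) X Y : 1 <= p ->
  (forall k, 0 <= X k) -> (forall j, 0 <= Y j) ->
  (forall k, X k <= decay_sup k Y) ->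
  lnorm p setT X <= (decay_const p)%:E * lnorm p setT Y.
Proof.
case: p => [p| |] // p1 X0 Y0 XY /=.
- have {}p1 : (1 <= p)%R by rewrite lee_fin in p1.
  apply: poweR_le_mul; rewrite ?invr_ge0 ?esum_poweR_ge0 //; [lra|exact: ltW|].
  apply: (@le_trans _ _ (\esum_(k in [set: int]) \esum_(j in [set: int])
      (s ^+ `|k - j|%N)%:E * Y j `^ p)).
    apply: le_esum => k _; apply: le_trans (poweR_decay_sup_le k p1 Y0).
    by apply: lee_poweR (X0 k) (XY k); lra.
  rewrite esum_swap => [|k j]; last by rewrite mule_ge0 ?poweR_ge0.
  rewrite -esumZl // => [|j]; last exact: poweR_ge0.
  apply: le_esum => j _; apply: le_trans (le_esum_mulr _ _ (poweR_ge0 _ _)) _.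
    by move=> k; exact: decay_ge0.
  apply: lee_wpmul2r; first exact: poweR_ge0.
  under eq_esum do rewrite distnC.
  exact: esum_geometric_distz_le.
- rewrite mul1e; apply: ge_ereal_sup => x [->|[k _ <-]].
    by apply: ereal_sup_ubound; left.
  apply: le_trans (XY k) _; apply: ge_ereal_sup => _ [j _ <-].
  apply: (@le_trans _ _ (Y j)); last by apply: ereal_sup_ubound; right; exists j.
  by rewrite -[leRHS]mul1e lee_wpmul2r // lee_fin exprn_ile1 // ltW.
Qed.

Lemma lnorm_le_decay_sup (q : \bar R) k h g (M : int -> set int) : 1 <= q ->
  (forall i, 0 <= h i) -> (forall i, 0 <= g i) -> (forall i, exists j, M j i) ->
  (forall j i, M j i -> h i <= ((s ^+ `|k - j|%N) ^+ 2)%:E * g i) ->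
  lnorm q setT h <= (decay_const q)%:E * decay_sup k (fun j => lnorm q (M j) g).
Proof.
case: q => [q| |] // q1 h0 g0 cover hg /=.
- have {}q1 : (1 <= q)%R by rewrite lee_fin in q1.
  have q0 : (0 < q)%R by lra.
  have qN0 : q != 0%R by rewrite gt_eqF.
  set W := decay_sup k _.
  have W0 : 0 <= W by apply: decay_sup_ge0 => j; exact: poweR_ge0.
  rewrite -[W in leRHS](poweRK qN0 W0).
  apply: poweR_le_mul; rewrite ?invr_ge0 ?esum_poweR_ge0 ?poweR_ge0 //;
    [lra|exact: ltW|].
  apply: le_trans (esum_le_cover (fun i => poweR_ge0 (h i) q) cover) _.
  apply: (@le_trans _ _ (\esum_(j in [set: int]) (s ^+ `|k - j|%N)%:E * W `^ q)).
    apply: le_esum => j _; set c := (s ^+ `|k - j|%N)%R.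
    have c0 : (0 <= c)%R by rewrite exprn_ge0 // ltW.
    apply: (@le_trans _ _ (\esum_(i in M j) ((c ^+ 2) `^ q)%:E * g i `^ q)).
      apply: le_esum => i Mji.
      rewrite -poweR_EFin -poweRM ?lee_fin ?exprn_ge0 ?(ltW s_gt0) //.
      exact: lee_poweR (ltW q0) (h0 i) (hg j i Mji).
    rewrite esumZl ?powR_gt0 ?exprn_gt0 // => [|i]; last exact: poweR_ge0.
    (* one factor c^q is summed over j, the other enters the supremum W *)
    rewrite expr2 powRM // EFinM -muleA; apply: lee_pmul.
    - exact: poweR_ge0 (c%:E) q.
    - by rewrite mule_ge0 ?esum_poweR_ge0 // -poweR_EFin poweR_ge0.
    - by rewrite lee_fin decay_powR_le.
    - rewrite -(poweRVK qN0 (esum_poweR_ge0 _ _ _)) -poweR_EFin.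
      rewrite -poweRM ?lee_fin ?poweR_ge0 //.
      apply: lee_poweR (ltW q0) _ (decay_sup_ub k _ j).
      by rewrite mule_ge0 ?lee_fin ?poweR_ge0.
  apply: le_trans (le_esum_mulr _ _ (poweR_ge0 _ _)) _ => [j|].
    exact: decay_ge0.
  by apply: lee_wpmul2r; [exact: poweR_ge0|exact: esum_geometric_distz_le].
- rewrite mul1e; apply: ge_ereal_sup => x [->|[i _ <-]].
    by apply: decay_sup_ge0 => j; apply: ereal_sup_ubound; left.
  have [j Mji] := cover i; apply: le_trans (hg j i Mji) _.
  apply: le_trans (decay_sup_ub k _ j); rewrite expr2 EFinM -muleA.
  apply: lee_wpmul2l; first exact: decay_ge0.
  apply: (@le_trans _ _ (g i)); last by apply: ereal_sup_ubound; right; exists i.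
  by rewrite -[leRHS]mul1e lee_wpmul2r // lee_fin exprn_ile1 // ltW.
Qed.

End DecaySup.

Section KFunctional.
Variables (R : realType) (q : \bar R) (u0 u1 : int -> R).
Hypotheses (q1 : (1 <= q)%E) (u0_gt0 : forall i, 0 < u0 i)
  (u1_gt0 : forall i, 0 < u1 i).
Local Open Scope ereal_scope.

Lemma Kfun_ge0 (tau : R) a : (0 <= tau)%R -> 0 <= Kfun q u0 u1 tau a.
Proof.
move=> tau0; apply/ereal_infP => _ [x0 [x1 [_ ->]]].
by rewrite adde_ge0 ?mule_ge0 ?lnorm_ge0.
Qed.

Variables (tau : R) (a : int -> R).
Hypothesis tau_gt0 : (0 < tau)%R.

Let m i := Num.min (u0 i) (tau * u1 i)%R.

Let m_ge0 i : (0 <= m i)%R.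
Proof. by rewrite le_min !ltW ?mulr_gt0. Qed.

Lemma Kfun_le_lnorm_min :
  Kfun q u0 u1 tau a <= 2%:E * lnorm q setT (fun i => (`|a i| * m i)%:E).
Proof.
pose small i := (u0 i <= tau * u1 i)%R.
pose x0 i := if small i then a i else 0%R.
pose x1 i := if small i then 0%R else a i.
apply: (@le_trans _ _ (lq_w q u0 x0 + tau%:E * lq_w q u1 x1)).
  apply: ereal_inf_lbound; exists x0, x1; split => // i.
  by rewrite /x0 /x1; case: ifP; rewrite ?addr0 ?add0r.
rewrite (_ : 2%:E = 1 + 1) // ge0_muleDl // mul1e /lq_w -lnormZ //; apply: leeD.
- apply: le_lnorm => // i _; rewrite lee_fin /x0.
  case: ifP => small_i; last by rewrite mul0r normr0 mulr_ge0 ?m_ge0.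
  by rewrite /m min_l // normrM (gtr0_norm (u0_gt0 i)).
- apply: le_lnorm => // [i|i _]; first by rewrite -EFinM lee_fin mulr_ge0 // ltW.
  rewrite -EFinM lee_fin /x1; case: ifP => small_i.
    by rewrite mul0r normr0 mulr0 mulr_ge0 ?m_ge0.
  rewrite /m min_r; last by rewrite ltW // ltNge (negbT small_i).
  by rewrite normrM (gtr0_norm (u1_gt0 i)) mulrCA.
Qed.

Lemma lnorm_min_le_Kfun :
  lnorm q setT (fun i => (`|a i| * m i)%:E) <= 4%:E * Kfun q u0 u1 tau a.
Proof.
rewrite /Kfun -ereal_inf_pZl //; apply/ereal_infP => _ [_ [x0 [x1 [ax ->]]] <-].
apply: le_trans (lnorm_le_add (f := fun i => (`|x0 i| * m i)%:E)
                              (g := fun i => (`|x1 i| * m i)%:E) _ q1 _ _ _ _) _.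
- by move=> i; rewrite lee_fin mulr_ge0.
- by move=> i; rewrite lee_fin mulr_ge0.
- by move=> i; rewrite lee_fin mulr_ge0.
- by move=> i; rewrite -EFinD lee_fin -mulrDl ax ler_wpM2r ?ler_normD.
apply: lee_wpmul2l => //; apply: leeD.
- apply: le_lnorm => // [i|i _]; first by rewrite lee_fin mulr_ge0.
  by rewrite lee_fin normrM (gtr0_norm (u0_gt0 i)) ler_wpM2l // ge_min lexx.
- rewrite /lq_w -lnormZ //; apply: le_lnorm => // [i|i _].
    by rewrite lee_fin mulr_ge0.
  rewrite -EFinM lee_fin normrM (gtr0_norm (u1_gt0 i)) mulrCA ler_wpM2l //.
  by rewrite ge_min lexx orbT.
Qed.

End KFunctional.

Section StronglyMonotone.
Variable R : realType.

Lemma strongly_increasing_geometric (a : int -> R) : strongly_increasing a ->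
  forall k (n : nat), 2 ^+ n * a k <= a (k + n%:Z).
Proof.
move=> [a0 a2] k; elim=> [|n IH]; first by rewrite expr0 mul1r addr0.
have := a2 (k + n%:Z); rewrite ler_pdivlMr // -addrA -PoszD addn1 => a2k.
by rewrite exprS -mulrA; apply: le_trans _ a2k; rewrite ler_pM2l.
Qed.

Lemma strongly_decreasing_geometric (b : int -> R) : strongly_decreasing b ->
  forall k (n : nat), b (k + n%:Z) <= 2^-1 ^+ n * b k.
Proof.
move=> [b0 b2] k; elim=> [|n IH]; first by rewrite expr0 mul1r addr0.
have := b2 (k + n%:Z); rewrite ler_pdivrMr // -addrA -PoszD addn1 => b2k.
by apply: le_trans b2k _; rewrite exprS -mulrA ler_pM2l ?invr_gt0.
Qed.

Lemma nat_crossing (P : pred nat) N : P 0%N -> ~~ P N ->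
  exists m, P m /\ ~~ P m.+1.
Proof.
elim: N => [|N IH] P0 PN; first by rewrite P0 in PN.
by case PN' : (P N); [exists N|apply: IH; rewrite ?PN'].
Qed.

Lemma exists_pow2_gt (y : R) : exists n : nat, y < 2 ^+ n.
Proof.
exists (Num.Def.archi_bound `|y|).
apply: le_lt_trans (ler_norm y) (lt_trans (archi_boundP (normr_ge0 y)) _).
by rewrite -natrX ltr_nat ltn_expl.
Qed.

Lemma strongly_increasing_cover (t : int -> R) : strongly_increasing t ->
  forall x, 0 < x -> exists j, t j <= x <= t (j + 1).
Proof.
move=> t_si x x0; have [t_gt0 _] := t_si.
have [n0 n0_big] := exists_pow2_gt (t 0 / x).
have [N N_big] := exists_pow2_gt (x / t 0).
pose P m := t (- n0%:Z + m%:Z) <= x.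
have P0 : P 0%N.
  have := strongly_increasing_geometric t_si (- n0%:Z) n0; rewrite addNr.
  move: n0_big; rewrite ltr_pdivrMr // => n0_big t_n0.
  by rewrite /P addr0 -(ler_pM2l (exprn_gt0 n0 (ltr0n R 2))); lra.
have PN : ~~ P (n0 + N)%N.
  rewrite /P PoszD addrA addNr add0r -ltNge.
  have := strongly_increasing_geometric t_si 0 N; rewrite add0r.
  by move: N_big; rewrite ltr_pdivrMr //; lra.
have [m [Pm Pm1]] := nat_crossing P0 PN.
exists (- n0%:Z + m%:Z); apply/andP; split; first exact: Pm.
by move: Pm1; rewrite /P -ltNge -addn1 PoszD addrA => /ltW.
Qed.

End StronglyMonotone.

Section Discretization.
Variables (R : realType) (phi : R -> R) (t : int -> R).
Hypotheses (phi_nondecr : forall x y, 0 < x -> x <= y -> phi x <= phi y)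
  (phi_ratio_nonincr : forall x y, 0 < x -> x <= y -> phi y / y <= phi x / x)
  (t_disc : discretizing phi t).

Let t_gt0 k : 0 < t k.
Proof. by case: t_disc => -[]. Qed.

Lemma min_mul_phi_le_decay k j x : t j <= x <= t (j + 1) ->
  Num.min 1 (t k / x) * phi x <= 2 * 2^-1 ^+ `|k - j|%N * phi (t k).
Proof.
case/andP => tjx xtj1; have x0 : 0 < x := lt_le_trans (t_gt0 j) tjx.
have [_ phit_si phit_sd _] := t_disc.
have phix0 : 0 <= phi x.
  by apply: le_trans (phi_nondecr (t_gt0 j) tjx); rewrite ltW //; case: phit_si.
have [kj|jk] := leP k j.
- have [n jE] : exists n : nat, j = k + n%:Z by exists `|(j - k)%R|%N; lia.
  subst j.
  have -> : `|(k - (k + n%:Z))%R|%N = n by lia.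
  have ratio_decay : phi x / x <= 2^-1 ^+ n * (phi (t k) / t k).
    exact: le_trans (phi_ratio_nonincr (t_gt0 _) tjx)
                    (strongly_decreasing_geometric phit_sd k n).
  apply: (@le_trans _ _ (t k * (phi x / x))).
    rewrite [leRHS]mulrCA [leRHS]mulrC.
    by apply: ler_wpM2r => //; rewrite ge_min lexx orbT.
  apply: le_trans (ler_wpM2l (ltW (t_gt0 k)) ratio_decay) _.
  rewrite mulrCA [t k * _]mulrCA mulfV ?gt_eqF // mulr1 -mulrA ler_peMl ?ler1n //.
  by rewrite mulr_ge0 ?exprn_ge0 // ltW //; case: phit_si.
- have [n kE] : exists n : nat, k = j + 1 + n%:Z by exists `|(k - j - 1)%R|%N; lia.
  subst k.
  have -> : `|(j + 1 + n%:Z - j)%R|%N = n.+1 by lia.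
  have phit_growth := strongly_increasing_geometric phit_si (j + 1) n.
  rewrite exprS mulrA mulfV // mul1r exprVn.
  apply: le_trans (ler_piMl phix0 _) _; first by rewrite ge_min lexx.
  apply: le_trans (phi_nondecr x0 xtj1) _.
  by rewrite ler_pdivlMl ?exprn_gt0.
Qed.

Lemma phi_le_min_mul_neighbour k : exists2 k', (`|k - k'| <= 1)%N &
  forall x, t k <= x <= t (k + 1) ->
    phi (t k') <= 2 * (Num.min 1 (t k' / x) * phi x).
Proof.
(* For k in Z1, phi at most doubles on [t_k, t_(k+1)], so compare with k + 1;
   otherwise phi(t)/t at most halves there, so compare with k. *)
have [_ _ _ [Z1 Z1_split]] := t_disc.
have [Z1k|NZ1k] := pselect (Z1 k).
- exists (k + 1) => [|x /andP [tkx xtk1]]; first by lia.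
  have x0 : 0 < x := lt_le_trans (t_gt0 k) tkx.
  rewrite min_l ?mul1r; last by rewrite ler_pdivlMr // mul1r.
  have := (Z1_split k).1 Z1k; have := phi_nondecr (t_gt0 k) tkx; lra.
- exists k => [|x /andP [tkx xtk1]]; first by rewrite subrr.
  have x0 : 0 < x := lt_le_trans (t_gt0 k) tkx.
  rewrite min_r; last by rewrite ler_pdivrMr // mul1r.
  have : phi (t k) / t k <= 2 * (phi x / x).
    apply: le_trans ((Z1_split k).2 NZ1k) _; rewrite ler_pM2l //.
    exact: phi_ratio_nonincr x0 xtk1.
  by rewrite ler_pdivrMr // (_ : _ * t k = 2 * (t k / x * phi x)) //; ring.
Qed.

End Discretization.

Lemma min_inv_weights (R : realType) (f0 f1 r : R) : 0 < f0 -> 0 < f1 ->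
  Num.min f0^-1 (r * f1^-1) = Num.min 1 (r / (f1 / f0)) / f0.
Proof.
move=> f0_gt0 f1_gt0; rewrite minr_pMl ?invr_ge0 ?ltW // mul1r.
by congr Num.min; field; rewrite !gt_eqF.
Qed.

Section Corollary.
Variables (R : realType) (p q : \bar R) (phi0 phi1 phi : R -> R) (tt t : int -> R).
Hypotheses (p1 : (1 <= p)%E) (q1 : (1 <= q)%E).
Hypotheses (phi0_gt0 : forall x, 0 < x -> 0 < phi0 x)
  (phi1_gt0 : forall x, 0 < x -> 0 < phi1 x)
  (phi_gt0 : forall x, 0 < x -> 0 < phi x)
  (phi_nondecr : forall x y, 0 < x -> x <= y -> phi x <= phi y)
  (phi_ratio_nonincr : forall x y, 0 < x -> x <= y -> phi y / y <= phi x / x)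
  (tt_gt0 : forall i, 0 < tt i) (t_disc : discretizing phi t).

Local Notation u0 := (fun i => (phi0 (tt i))^-1).
Local Notation u1 := (fun i => (phi1 (tt i))^-1).
Local Notation w := (fun i => (phi_comp phi phi0 phi1 (tt i))^-1).
Local Notation x i := (phi1 (tt i) / phi0 (tt i)).
Local Notation M := (fun k => [set i | t k <= x i <= t (k + 1)]).

Let phi0_tt_gt0 i : 0 < phi0 (tt i). Proof. exact: phi0_gt0. Qed.
Let phi1_tt_gt0 i : 0 < phi1 (tt i). Proof. exact: phi1_gt0. Qed.

Let t_gt0 k : 0 < t k.
Proof. by case: t_disc => -[]. Qed.

Let x_gt0 i : 0 < x i.
Proof. by rewrite divr_gt0. Qed.

Let w_gt0 i : 0 < w i.
Proof. by rewrite invr_gt0 mulr_gt0 ?phi_gt0. Qed.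

Let u0_gt0 i : 0 < u0 i. Proof. by rewrite invr_gt0. Qed.
Let u1_gt0 i : 0 < u1 i. Proof. by rewrite invr_gt0. Qed.

Let m k i := Num.min (u0 i) (t k * u1 i).

Let m_ge0 k i : 0 <= m k i.
Proof. by rewrite le_min !ltW ?mulr_gt0. Qed.

Let min_weight_eq k i :
  m k i / phi (t k) = Num.min 1 (t k / x i) * phi (x i) / phi (t k) * w i.
Proof.
rewrite /m min_inv_weights // /phi_comp.
by field; rewrite !gt_eqF ?phi_gt0.
Qed.

Lemma min_weight_le_decay k j i : M j i ->
  m k i / phi (t k) <= 2 * 2^-1 ^+ `|k - j|%N * w i.
Proof.
move=> Mji; rewrite min_weight_eq (ler_pM2r (w_gt0 i)) ler_pdivrMr ?phi_gt0 //.
by have := min_mul_phi_le_decay phi_nondecr phi_ratio_nonincr t_disc k Mji.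
Qed.

Lemma weight_le_min_neighbour k : exists2 k', (`|k - k'| <= 1)%N &
  forall i, M k i -> w i <= 2 * (m k' i / phi (t k')).
Proof.
have [k' kk' phi_le] :=
  phi_le_min_mul_neighbour phi_nondecr phi_ratio_nonincr t_disc k.
exists k' => // i Mki; rewrite min_weight_eq mulrA ler_peMl ?(ltW (w_gt0 i)) //.
by rewrite mulrA ler_pdivlMr ?phi_gt0 // mul1r phi_le.
Qed.

Local Notation s := (Num.sqrt (2^-1 : R)).

Let s_gt0 : 0 < s.
Proof. by rewrite sqrtr_gt0 invr_gt0. Qed.

Let s_lt1 : s < 1.
Proof. by rewrite -[ltRHS]sqrtr1 ltr_sqrt // invf_lt1 ?ltr1n. Qed.

Local Open Scope ereal_scope.

Section Norms.
Variable a : int -> R.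

Let interp_term k := Kfun q u0 u1 (t k) a * ((phi (t k))^-1)%:E.
Let min_norm k := lnorm q setT (fun i => (`|a i| * (m k i / phi (t k)))%:E).
Let block_norm k := lnorm q (M k) (fun i => (`|a i * w i|)%:E).

Let interp_term_ge0 k : 0 <= interp_term k.
Proof.
apply: mule_ge0; first exact: Kfun_ge0 (ltW (t_gt0 k)).
by rewrite lee_fin invr_ge0 ltW ?phi_gt0.
Qed.

Let min_norm_eq k :
  min_norm k = ((phi (t k))^-1)%:E * lnorm q setT (fun i => (`|a i| * m k i)%:E).
Proof.
rewrite -lnormZ ?invr_gt0 ?phi_gt0 // => [|i]; last by rewrite lee_fin mulr_ge0.
by congr lnorm; apply: funext => i; rewrite -EFinM mulrA mulrC.
Qed.

Lemma interp_term_le_min_norm k : interp_term k <= 2%:E * min_norm k.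
Proof.
rewrite min_norm_eq muleCA /interp_term muleC.
apply: lee_wpmul2l.
  by rewrite lee_fin invr_ge0 ltW ?phi_gt0.
by have := Kfun_le_lnorm_min q1 u0_gt0 u1_gt0 a (t_gt0 k).
Qed.

Lemma min_norm_le_interp_term k : min_norm k <= 4%:E * interp_term k.
Proof.
rewrite min_norm_eq /interp_term (muleC (Kfun _ _ _ _ _)) muleCA.
apply: lee_wpmul2l.
  by rewrite lee_fin invr_ge0 ltW ?phi_gt0.
by have := lnorm_min_le_Kfun q1 u0_gt0 u1_gt0 a (t_gt0 k).
Qed.

Lemma min_norm_le_decay_sup k :
  min_norm k <= (2 * decay_const s q)%:E * decay_sup s k block_norm.
Proof.
have cover i : exists j, M j i.
  by have [t_si _ _ _] := t_disc; exact: strongly_increasing_cover t_si _ (x_gt0 i).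
apply: le_trans (lnorm_le_decay_sup s_gt0 s_lt1
  (k := k) (g := fun i => (2 * `|a i * w i|)%:E) (M := M) q1 _ _ cover _) _.
- by move=> i; rewrite lee_fin mulr_ge0 // divr_ge0 ?m_ge0 // ltW ?phi_gt0.
- by move=> i; rewrite lee_fin mulr_ge0.
- move=> j i Mji; rewrite -EFinM lee_fin -exprM mulnC exprM sqr_sqrtr ?invr_ge0 //.
  apply: le_trans (ler_wpM2l (normr_ge0 (a i)) (min_weight_le_decay k Mji)) _.
  rewrite normrM (gtr0_norm (w_gt0 i)) le_eqVlt.
  by apply/orP; left; apply/eqP; ring.
have -> : (fun j => lnorm q (M j) (fun i => (2 * `|a i * w i|)%:E)) =
          (fun j => 2%:E * block_norm j).
  by apply: funext => j; rewrite -lnormZ //; under eq_fun do rewrite EFinM.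
by rewrite decay_supZ // muleA -EFinM mulrC.
Qed.

Lemma interp_le_mixed : interp_norm p q u0 u1 phi t a <=
  (decay_const s p * (4 * decay_const s q))%:E * mixed_norm p q M w a.
Proof.
change (lnorm p setT interp_term <=
  (decay_const s p * (4 * decay_const s q))%:E * lnorm p setT block_norm).
have CQ_gt0 : (0 < 4 * decay_const s q)%R by rewrite mulr_gt0 ?decay_const_gt0.
have term_le_sup k : interp_term k <=
    decay_sup s k (fun j => (4 * decay_const s q)%:E * block_norm j).
  rewrite decay_supZ // (_ : 4 * _ = 2 * (2 * decay_const s q))%R; last by ring.
  rewrite EFinM -muleA; apply: le_trans (interp_term_le_min_norm k) _.
  exact: lee_wpmul2l (min_norm_le_decay_sup k).
apply: le_trans (lnorm_decay_sup_le s_gt0 s_lt1 p1 interp_term_ge0 _ term_le_sup) _.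
  by move=> j; rewrite mule_ge0 ?lnorm_ge0 // lee_fin ltW.
by rewrite lnormZ // => [|j]; [rewrite muleA -EFinM|exact: lnorm_ge0].
Qed.

Lemma mixed_le_interp : mixed_norm p q M w a <=
  (decay_const s p * (8 / s))%:E * interp_norm p q u0 u1 phi t a.
Proof.
change (lnorm p setT block_norm <=
  (decay_const s p * (8 / s))%:E * lnorm p setT interp_term).
have block_le_sup k :
    block_norm k <= decay_sup s k (fun j => (8 / s)%:E * interp_term j).
  have [k' kk' w_le] := weight_le_min_neighbour k.
  apply: (@le_trans _ _ (2%:E * min_norm k')).
    rewrite /min_norm -lnormZ // => [|i]; last first.
      by rewrite lee_fin mulr_ge0 // divr_ge0 ?m_ge0 // ltW ?phi_gt0.
    apply: le_lnorm => // i Mki; rewrite -EFinM lee_fin normrM.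
    by rewrite (gtr0_norm (w_gt0 i)) [leRHS]mulrCA ler_wpM2l ?w_le.
  apply: le_trans (lee_wpmul2l _ (min_norm_le_interp_term k')) _ => //.
  apply: le_trans (decay_sup_ub _ _ _ k').
  rewrite muleA -EFinM [leRHS]muleA -EFinM.
  apply: lee_wpmul2r; [exact: interp_term_ge0|rewrite lee_fin].
  have s_le : (s <= s ^+ `|k - k'|%N)%R.
    by rewrite -[leLHS]expr1 ler_wiXn2l // ltW.
  rewrite (_ : 2 * 4 = s * (8 / s))%R; last by field; rewrite gt_eqF.
  by rewrite ler_wpM2r // divr_ge0 // ltW.
apply: le_trans (lnorm_decay_sup_le s_gt0 s_lt1 p1 (fun k => lnorm_ge0 _ _ _) _
  block_le_sup) _.
  by move=> j; rewrite mule_ge0 // lee_fin divr_ge0 // ltW.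
by rewrite lnormZ ?divr_gt0 // muleA -EFinM.
Qed.

End Norms.

Local Close Scope ereal_scope.

Lemma interp_norm_equiv_mixed_norm : exists C : R, 0 < C /\
  forall a : int -> R,
    (interp_norm p q u0 u1 phi t a <= C%:E * mixed_norm p q M w a)%E /\
    (mixed_norm p q M w a <= C%:E * interp_norm p q u0 u1 phi t a)%E.
Proof.
pose C1 := decay_const s p * (4 * decay_const s q).
pose C2 := decay_const s p * (8 / s).
have C1_gt0 : 0 < C1 by rewrite !mulr_gt0 ?decay_const_gt0.
have C2_gt0 : 0 < C2 by rewrite !mulr_gt0 ?decay_const_gt0 ?invr_gt0.
exists (C1 + C2); split => [|a]; first exact: addr_gt0.
split.
- apply: le_trans (interp_le_mixed a) (lee_wpmul2r (lnorm_ge0 _ _ _) _).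
  by rewrite lee_fin lerDl ltW.
- apply: le_trans (mixed_le_interp a) (lee_wpmul2r (lnorm_ge0 _ _ _) _).
  by rewrite lee_fin lerDr ltW.
Qed.

End Corollary.

Theorem corollary3p4 (R : realType) (p q : \bar R)
  (phi0 phi1 phi : R -> R) (tt t : int -> R) :
  (1 <= p)%E -> (1 <= q)%E ->
  ndqc phi0 -> ndqc phi1 -> ndqc phi ->
  discretizing (phi_comp phi phi0 phi1) tt ->
  discretizing phi t ->
  let u0 := fun i => (phi0 (tt i))^-1 in
  let u1 := fun i => (phi1 (tt i))^-1 in
  let w := fun i => (phi_comp phi phi0 phi1 (tt i))^-1 in
  let M := fun k => [set i | t k <= phi1 (tt i) / phi0 (tt i) <= t (k + 1)] in
  exists C : R, 0 < C /\
    forall a : int -> R,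
      (interp_norm p q u0 u1 phi t a <= C%:E * mixed_norm p q M w a)%E /\
      (mixed_norm p q M w a <= C%:E * interp_norm p q u0 u1 phi t a)%E.
Proof.
move=> p1 q1 [phi0_gt0 _ _ _ _] [phi1_gt0 _ _ _ _]
  [phi_gt0 phi_nondecr phi_ratio_nonincr _ _] [[tt_gt0 _] _ _ _] t_disc.
exact: interp_norm_equiv_mixed_norm.
Qed.
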